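(* Let $0<\alpha<\eta$ with $\alpha\notin\mathbb N$. Let $D\subseteq\mathbb R^d$ be such that for all $x,y\in D$ with $x\ne y$ it holds $y+\sum_{j=1}^d(\rho_j\,d(x,y))^{\mathfrak s_j}\mathbf e_j\in D$ for all $\rho=(\rho_1,\dots,\rho_d)\in\mathbb N^d$. Assume $U$ is a germ over $D$ with $\|U\|_{G^\eta(D)}+[U]_{G^{\eta,\alpha}(D)}<\infty$. Then for all $R>0$, $$\sup_{x\in D}[U_x]_{C^\alpha(D\cap B_R(x))}\lesssim_{\mathfrak s,d,\eta,\alpha}\big(\|U\|_{G^\eta(D)}+[U]_{G^{\eta,\alpha}(D)}\big)R^{\eta-\alpha}.$$
   Context: Fix a scaling $\mathfrak s\in\mathbb N^d$; $\mathbb N=\{1,2,\dots\}$; for $\beta\in\mathbb N_0^d$, $|\beta|:=\sum_i\mathfrak s_i\beta_i$; $d(x,y):=\sum_i|x_i-y_i|^{1/\mathfrak s_i}$, $B_R(x)$ the open ball for $d$, $\mathcal P_k$ the polynomials $\sum_{|\beta|\le k}c_\beta z^\beta$. A germ over $D$ is a family $U=(U_x)_{x\in D}$ of continuous $U_x:D\to\mathbb C$; $\|U\|_{G^\eta(D)}$ is the infimum of $M>0$ with $|U_x(y)|\le M\,d(x,y)^\eta$ for all $x,y\in D$; $[U]_{G^{\eta,\alpha}(D)}$ is the infimum of $M>0$ such that for all $x,y\in D$ there is $P\in\mathcal P_{\lfloor\eta\rfloor}$ with $|(U_x-U_y-P)(z)|\le M\,d(y,z)^\alpha(d(x,y)+d(y,z))^{\eta-\alpha}$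 for all $z\in D$. For $A\subseteq\mathbb R^d$ and a function $f$ on $A$, $[f]_{C^\alpha(A)}$ is the infimum of all $M>0$ such that for every $y\in A$ there is $P\in\mathcal P_{\lfloor\alpha\rfloor}$ with $|f(z)-P(z)|\le M\,d(z,y)^\alpha$ for all $z\in A$. *)

From Stdlib Require Import Reals.
From Coquelicot Require Import Coquelicot.
From mathcomp Require Import ssreflect ssrfun ssrbool eqtype ssrnat seq
  choice fintype finfun bigop.

Set Implicit Arguments.
Unset Strict Implicit.
Unset Printing Implicit Defensive.

Local Open Scope R_scope.

Definition pt (d : nat) := 'I_d -> R.

(* a^b for a >= 0 with the convention 0^b = 0 (only used with b > 0) *)
Definition rpow (a b : R) : R := if Rlt_dec 0 a then Rpower a b else 0.

Definition sdist (d : nat) (s : 'I_d -> nat) (x y : pt d) : R :=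
  \big[Rplus/0]_(i < d) rpow (Rabs (x i - y i)) (/ INR (s i)).

Definition sball (d : nat) (s : 'I_d -> nat) (x : pt d) (r : R) (y : pt d) : Prop :=
  sdist s x y < r.

Definition sdeg (d : nat) (s : 'I_d -> nat) (b : 'I_d -> nat) : nat :=
  (\sum_(i < d) s i * b i)%N.

Definition floorR (a : R) : nat := Z.to_nat (Int_part a).

(* Every multi-index
   with |beta| <= k has beta_i <= k (since s_i >= 1), so beta ranges over
   {ffun 'I_d -> 'I_k.+1}; every element of P_k is of the form polyP s k c. *)
Definition polyP (d : nat) (s : 'I_d -> nat) (k : nat)
  (c : {ffun 'I_d -> 'I_k.+1} -> C) (z : pt d) : C :=
  \big[Cplus/RtoC 0]_(b : {ffun 'I_d -> 'I_k.+1} | (sdeg s (fun i => nat_of_ord (b i)) <= k)%N)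
     Cmult (c b) (RtoC (\big[Rmult/1]_(i < d) (z i ^ nat_of_ord (b i)))).

Definition germ (d : nat) (s : 'I_d -> nat) (D : pt d -> Prop)
  (U : pt d -> pt d -> C) : Prop :=
  forall x y, D x -> D y -> forall eps, 0 < eps ->
    exists del, 0 < del /\
      forall z, D z -> sdist s y z < del -> Cmod (Cminus (U x z) (U x y)) < eps.

Definition Gnorm (d : nat) (s : 'I_d -> nat) (D : pt d -> Prop) (eta : R)
  (U : pt d -> pt d -> C) : Rbar :=
  Glb_Rbar (fun M => 0 < M /\
    forall x y, D x -> D y -> Cmod (U x y) <= M * rpow (sdist s x y) eta).

Definition Gsemi (d : nat) (s : 'I_d -> nat) (D : pt d -> Prop) (eta alpha : R)
  (U : pt d -> pt d -> C) : Rbar :=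
  Glb_Rbar (fun M => 0 < M /\
    forall x y, D x -> D y ->
      exists c : {ffun 'I_d -> 'I_(floorR eta).+1} -> C,
        forall z, D z ->
          Cmod (Cminus (Cminus (U x z) (U y z)) (polyP s c z))
            <= M * rpow (sdist s y z) alpha
                 * rpow (sdist s x y + sdist s y z) (eta - alpha)).

Definition Holder (d : nat) (s : 'I_d -> nat) (A : pt d -> Prop) (alpha : R)
  (f : pt d -> C) : Rbar :=
  Glb_Rbar (fun M => 0 < M /\
    forall y, A y ->
      exists c : {ffun 'I_d -> 'I_(floorR alpha).+1} -> C,
        forall z, A z ->
          Cmod (Cminus (f z) (polyP s c z)) <= M * rpow (sdist s z y) alpha).

From HB Require Import structures.
From Stdlib Require Import Reals Lra Lia ZArith Classical FunctionalExtensionality.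
From Coquelicot Require Import Coquelicot.
From mathcomp Require Import ssreflect ssrfun ssrbool eqtype ssrnat seq
  choice fintype finfun bigop.

Set Implicit Arguments.
Unset Strict Implicit.
Unset Printing Implicit Defensive.

Local Open Scope R_scope.

(* Fix x and a point y of B_R(x), and put lam = d(x,y). For y = x the zero
   polynomial works, since |U_x(z)| <= ||U|| d(x,z)^eta. Otherwise let Q in P_k,
   k = floor eta, be the polynomial attached to the pair (x,y) by [U], expanded
   as Q(z) = sum_beta q_beta (z - y)^beta. On the grid
   y + sum_j (rho_j lam)^(s_j) e_j, rho in {1..k+1}^d, which lies in D and at
   distance O(lam) from x and y, Q = (U_x - U_y) - (U_x - U_y - Q) = O(lam^eta);
   inverting the evaluation on this grid (a tensor product of Vandermonde
   systems) gives |q_beta| lam^|beta| = O(lam^eta). The part T of Q of degree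
   at most floor alpha is the required approximant:
   U_x - T = (U_x - U_y - Q) + U_y + (Q - T), the first two terms are
   O(R^(eta-alpha) d(y,z)^alpha), and so is every monomial of Q - T, because
   alpha < |beta| <= eta and lam, d(y,z) <= 2R. The norms being infima, the
   estimate is then passed to them up to an arbitrary eps. *)

HB.instance Definition _ := Monoid.isComLaw.Build R 0 Rplus
  (fun x y z => esym (Rplus_assoc x y z)) Rplus_comm Rplus_0_l.
HB.instance Definition _ := Monoid.isComLaw.Build R 1 Rmult
  (fun x y z => esym (Rmult_assoc x y z)) Rmult_comm Rmult_1_l.
HB.instance Definition _ := Monoid.isMulLaw.Build R 0 Rmult Rmult_0_l Rmult_0_r.
HB.instance Definition _ :=
  Monoid.isAddLaw.Build R Rmult Rplus Rmult_plus_distr_r Rmult_plus_distr_l.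

HB.instance Definition _ := Monoid.isComLaw.Build C (RtoC 0) Cplus
  Cplus_assoc Cplus_comm Cplus_0_l.
HB.instance Definition _ := Monoid.isComLaw.Build C (RtoC 1) Cmult
  Cmult_assoc Cmult_comm Cmult_1_l.
HB.instance Definition _ := Monoid.isMulLaw.Build C (RtoC 0) Cmult Cmult_0_l Cmult_0_r.
HB.instance Definition _ :=
  Monoid.isAddLaw.Build C Cmult Cplus Cmult_plus_distr_r Cmult_plus_distr_l.

Lemma Rsum_ge0 (I : Type) (r : seq I) (P : pred I) (F : I -> R) :
  (forall i, P i -> 0 <= F i) -> 0 <= \big[Rplus/0]_(i <- r | P i) F i.
Proof. by move=> F_ge0; apply: big_ind => // *; lra. Qed.

Lemma Rsum_le (I : Type) (r : seq I) (P : pred I) (F G : I -> R) :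
  (forall i, P i -> F i <= G i) ->
  \big[Rplus/0]_(i <- r | P i) F i <= \big[Rplus/0]_(i <- r | P i) G i.
Proof. by move=> FG; apply: big_ind2 => // *; lra. Qed.

Lemma Rsum_sub (I : Type) (r : seq I) (P : pred I) (F G : I -> R) :
  \big[Rplus/0]_(i <- r | P i) (F i - G i) =
  \big[Rplus/0]_(i <- r | P i) F i - \big[Rplus/0]_(i <- r | P i) G i.
Proof.
elim: r => [|i r IH]; first by rewrite !big_nil; ring.
by rewrite !big_cons; case: (P i); rewrite ?IH; ring.
Qed.

Lemma Rsum_term_le (I : finType) (F : I -> R) i :
  (forall j, 0 <= F j) -> F i <= \big[Rplus/0]_j F j.
Proof.
move=> F_ge0; rewrite (bigD1 i) //=.
have := @Rsum_ge0 _ (index_enum I) (fun j => j != i) F (fun j _ => F_ge0 j); lra.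
Qed.

Lemma Rsum_filter_le (I : finType) (P : pred I) (F : I -> R) :
  (forall i, 0 <= F i) -> \big[Rplus/0]_(i | P i) F i <= \big[Rplus/0]_i F i.
Proof.
move=> F_ge0; rewrite big_mkcond /=; apply: Rsum_le => i _.
by case: (P i); [apply: Rle_refl | apply: F_ge0].
Qed.

Lemma Rprod_le (I : Type) (r : seq I) (P : pred I) (F G : I -> R) :
  (forall i, P i -> 0 <= F i <= G i) ->
  0 <= \big[Rmult/1]_(i <- r | P i) F i <= \big[Rmult/1]_(i <- r | P i) G i.
Proof.
move=> FG; apply: (big_ind2 (fun a b => 0 <= a <= b)) => //; first lra.
move=> a1 a2 b1 b2 [? ?] [? ?]; split; first exact: Rmult_le_pos.
exact: Rmult_le_compat.
Qed.

Lemma Rabs_prod (I : Type) (r : seq I) (P : pred I) (F : I -> R) :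
  Rabs (\big[Rmult/1]_(i <- r | P i) F i) = \big[Rmult/1]_(i <- r | P i) Rabs (F i).
Proof. by apply: big_morph; [exact: Rabs_mult | exact: Rabs_R1]. Qed.

Lemma Rprod_pow (I : Type) (r : seq I) (P : pred I) (x : R) (F : I -> nat) :
  \big[Rmult/1]_(i <- r | P i) x ^ F i = x ^ (\sum_(i <- r | P i) F i)%N.
Proof.
elim: r => [|i r IH]; first by rewrite !big_nil.
by rewrite !big_cons; case: (P i); rewrite ?IH ?pow_add.
Qed.

Lemma Cmod_sum (I : Type) (r : seq I) (P : pred I) (F : I -> C) :
  Cmod (\big[Cplus/RtoC 0]_(i <- r | P i) F i) <= \big[Rplus/0]_(i <- r | P i) Cmod (F i).
Proof.
elim: r => [|i r IH]; first by rewrite !big_nil Cmod_0; lra.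
rewrite !big_cons; case: (P i) => //.
by apply: Rle_trans (Cmod_triangle _ _) _; lra.
Qed.

Lemma RtoC_sum (I : Type) (r : seq I) (P : pred I) (F : I -> R) :
  RtoC (\big[Rplus/0]_(i <- r | P i) F i) = \big[Cplus/RtoC 0]_(i <- r | P i) RtoC (F i).
Proof. by apply: big_morph => // a b; rewrite RtoC_plus. Qed.

Lemma INR_gt0 (n : nat) : (0 < n)%N -> 0 < INR n.
Proof. by move=> /ltP; apply: lt_0_INR. Qed.

Lemma floorR_spec a : 0 <= a -> INR (floorR a) <= a < INR (floorR a) + 1.
Proof.
move=> a_ge0; have [a_ge a_lt] := base_Int_part a.
have Int_gt : (-1 < Int_part a)%Z by apply: lt_IZR; lra.
have Int_ge0 : (0 <= Int_part a)%Z by lia.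
by rewrite /floorR INR_IZR_INZ Z2Nat.id //; lra.
Qed.

Lemma Cmod_sub_sub_le a b c : Cmod (Cminus (Cminus a b) c) <= Cmod a + Cmod b + Cmod c.
Proof.
rewrite /Cminus; apply: Rle_trans (Cmod_triangle _ _) _; rewrite Cmod_opp.
by have := Cmod_triangle a (Copp b); rewrite Cmod_opp; lra.
Qed.

Lemma rpow_ge0 a b : 0 <= rpow a b.
Proof.
rewrite /rpow; case: Rlt_dec => /= _; last exact: Rle_refl.
by apply: Rlt_le; apply: exp_pos.
Qed.

Lemma rpowE a b : 0 < a -> rpow a b = Rpower a b.
Proof. by rewrite /rpow; case: Rlt_dec. Qed.

Lemma rpow_le0 a b : a <= 0 -> rpow a b = 0.
Proof. by rewrite /rpow; case: Rlt_dec => //= ?; lra. Qed.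

Lemma rpow_gt0 a b : 0 < a -> 0 < rpow a b.
Proof. by move=> a_gt0; rewrite rpowE //; apply: exp_pos. Qed.

Lemma rpow_le a b e : 0 <= a <= b -> 0 <= e -> rpow a e <= rpow b e.
Proof.
move=> [a_ge0 ab] e_ge0; case: (Rle_lt_dec a 0) => [a_le0|a_gt0].
  by rewrite rpow_le0 //; apply: rpow_ge0.
by rewrite !rpowE; try lra; apply: Rle_Rpower_l; lra.
Qed.

Lemma rpowMl a b e : 0 <= a -> 0 <= b -> rpow (a * b) e = rpow a e * rpow b e.
Proof.
move=> a_ge0 b_ge0; case: (Rle_lt_dec a 0) => [a_le0|a_gt0].
  have -> : a = 0 by lra.
  by rewrite Rmult_0_l !(rpow_le0 e (Rle_refl 0)) Rmult_0_l.
case: (Rle_lt_dec b 0) => [b_le0|b_gt0].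
  have -> : b = 0 by lra.
  by rewrite Rmult_0_r !(rpow_le0 e (Rle_refl 0)) Rmult_0_r.
by rewrite !rpowE ?Rpower_mult_distr //; apply: Rmult_lt_0_compat.
Qed.

Lemma rpowD a e1 e2 : rpow a (e1 + e2) = rpow a e1 * rpow a e2.
Proof.
case: (Rle_lt_dec a 0) => [a_le0|a_gt0]; first by rewrite !(rpow_le0 _ a_le0); ring.
by rewrite !rpowE // Rpower_plus.
Qed.

Lemma rpow_nat a n : 0 <= a -> (0 < n)%N -> rpow a (INR n) = a ^ n.
Proof.
move=> a_ge0; case: n => // n _; case: (Rle_lt_dec a 0) => [a_le0|a_gt0].
  by rewrite rpow_le0 // (_ : a = 0) ?pow_i; [|apply/ltP|lra].
by rewrite rpowE // Rpower_pow.
Qed.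

Lemma rpow_inv_natK a n : 0 <= a -> (0 < n)%N -> rpow a (/ INR n) ^ n = a.
Proof.
move=> a_ge0 n_gt0; have n_pos := INR_gt0 n_gt0.
case: (Rle_lt_dec a 0) => [a_le0|a_gt0].
  rewrite rpow_le0 // pow_i; [lra | exact/ltP].
rewrite rpowE // -Rpower_pow; last exact: exp_pos.
by rewrite Rpower_mult Rinv_l ?Rpower_1 //; lra.
Qed.

Lemma rpow_pow_inv_nat a n : 0 <= a -> (0 < n)%N -> rpow (a ^ n) (/ INR n) = a.
Proof.
move=> a_ge0 n_gt0; have n_pos := INR_gt0 n_gt0.
case: (Rle_lt_dec a 0) => [a_le0|a_gt0].
  have -> : a = 0 by lra.
  rewrite pow_i; last exact/ltP.
  by rewrite rpow_le0 //; apply: Rle_refl.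
rewrite rpowE; last exact: pow_lt.
by rewrite -Rpower_pow // Rpower_mult Rinv_r ?Rpower_1 //; lra.
Qed.

Lemma rpow_interpolate t B a e : 0 <= t <= B -> a <= e ->
  rpow t e <= rpow t a * rpow B (e - a).
Proof.
move=> tB ae; rewrite -{1}(Rplus_minus a e) rpowD.
by apply: Rmult_le_compat_l; [apply: rpow_ge0 | apply: rpow_le; lra].
Qed.

Lemma pow_interpolate t B a m : 0 <= t <= B -> 0 < a -> a <= INR m ->
  t ^ m <= rpow t a * rpow B (INR m - a).
Proof.
move=> tB a_gt0 am; have m_gt0 : (0 < m)%N by case: m am => [|n] //= ?; lra.
by rewrite -rpow_nat //; [apply: rpow_interpolate | lra].
Qed.

Lemma pow_superadditive u v n : 0 <= u -> 0 <= v -> (0 < n)%N ->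
  u ^ n + v ^ n <= (u + v) ^ n.
Proof.
move=> u_ge0 v_ge0; case: n => // n _; elim: n => [|n IH] /=; first lra.
have un_ge0 := pow_le u n u_ge0; have vn_ge0 := pow_le v n v_ge0.
have : (u + v) * (u * u ^ n + v * v ^ n) <= (u + v) * ((u + v) * (u + v) ^ n).
  by apply: Rmult_le_compat_l; [lra | exact: IH].
have : 0 <= u * (v * v ^ n) + v * (u * u ^ n).
  by apply: Rplus_le_le_0_compat; repeat apply: Rmult_le_pos.
nra.
Qed.

Lemma rpow_inv_nat_subadditive a b n : (0 < n)%N ->
  rpow (Rabs (a + b)) (/ INR n) <= rpow (Rabs a) (/ INR n) + rpow (Rabs b) (/ INR n).
Proof.
move=> n_gt0; have n_pos := INR_gt0 n_gt0.
set u := rpow (Rabs a) _; set v := rpow (Rabs b) _.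
have u_ge0 : 0 <= u by apply: rpow_ge0.
have v_ge0 : 0 <= v by apply: rpow_ge0.
rewrite -(@rpow_pow_inv_nat (u + v) n _ n_gt0); last lra.
apply: rpow_le; last exact/Rlt_le/Rinv_0_lt_compat.
split; first exact: Rabs_pos.
apply: Rle_trans (Rabs_triang a b) _.
rewrite -{1}(rpow_inv_natK (Rabs_pos a) n_gt0).
rewrite -{1}(rpow_inv_natK (Rabs_pos b) n_gt0).
exact: pow_superadditive.
Qed.

Section ScaledDistance.
Variables (d : nat) (s : 'I_d -> nat).
Hypothesis s_gt0 : forall i, (0 < s i)%N.

Lemma sdist_ge0 x y : 0 <= sdist s x y.
Proof. by apply: Rsum_ge0 => i _; apply: rpow_ge0. Qed.

Lemma sdist_sym x y : sdist s x y = sdist s y x.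
Proof. by apply: eq_bigr => i _; rewrite Rabs_minus_sym. Qed.

Lemma sdist_triangle x y z : sdist s x z <= sdist s x y + sdist s y z.
Proof.
rewrite /sdist -big_split /=; apply: Rsum_le => i _.
rewrite (_ : x i - z i = (x i - y i) + (y i - z i)); last ring.
exact: rpow_inv_nat_subadditive.
Qed.

Lemma Rabs_sub_le_sdist x y i : Rabs (x i - y i) <= sdist s x y ^ s i.
Proof.
rewrite -(rpow_inv_natK (Rabs_pos (x i - y i)) (s_gt0 i)).
apply: pow_incr; split; first exact: rpow_ge0.
apply: (@Rsum_term_le _ (fun j => rpow (Rabs (x j - y j)) (/ INR (s j)))) => j.
exact: rpow_ge0.
Qed.

Lemma sdist_gt0 x y : x <> y -> 0 < sdist s x y.
Proof.
move=> xy; case: (Rle_lt_dec (sdist s x y) 0) => // d_le0; case: xy.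
apply: functional_extensionality => i; apply: Rminus_diag_uniq; apply: Rabs_eq_0.
have := Rabs_sub_le_sdist x y i; have := Rabs_pos (x i - y i).
rewrite (_ : sdist s x y = 0) ?pow_i; first lra; last by have := sdist_ge0 x y; lra.
exact/ltP.
Qed.

Lemma sdist_shift y (rho : 'I_d -> nat) lam : 0 <= lam ->
  sdist s y (fun j => y j + (INR (rho j) * lam) ^ s j) =
  \big[Rplus/0]_(j < d) (INR (rho j) * lam).
Proof.
move=> lam_ge0; apply: eq_bigr => j _.
have rl_ge0 : 0 <= INR (rho j) * lam by apply: Rmult_le_pos => //; apply: pos_INR.
rewrite (_ : y j - _ = - (INR (rho j) * lam) ^ s j); last ring.
by rewrite Rabs_Ropp Rabs_right ?rpow_pow_inv_nat //; apply/Rle_ge/pow_le.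
Qed.

End ScaledDistance.

Local Notation mindex d k := {ffun 'I_d -> 'I_k.+1}.
Local Notation sdegf s b := (sdeg s (fun i => nat_of_ord (b i))).

Section CenteredPolynomials.
Variables (d : nat) (s : 'I_d -> nat).
Hypothesis s_gt0 : forall i, (0 < s i)%N.

Definition monomial (y : pt d) (b : 'I_d -> nat) (z : pt d) : R :=
  \big[Rmult/1]_(i < d) (z i - y i) ^ b i.

Definition eval_terms (y : pt d) (l : seq (C * ('I_d -> nat))) (z : pt d) : C :=
  \big[Cplus/RtoC 0]_(p <- l) Cmult p.1 (RtoC (monomial y p.2 z)).

(* Unlike [polyP_at], a list of terms may repeat exponents, which makes closure
   under sums, products by z_i - y'_i and recentering immediate;
   [polyP_at_of_poly_at] collects the terms. *)
Definition poly_at (y : pt d) (k : nat) (f : pt d -> C) : Prop :=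
  exists l, all (fun p => sdeg s p.2 <= k)%N l /\ forall z, f z = eval_terms y l z.

Definition polyP_at (y : pt d) (k : nat) (c : mindex d k -> C) (z : pt d) : C :=
  \big[Cplus/RtoC 0]_(b : mindex d k | (sdegf s b <= k)%N)
     Cmult (c b) (RtoC (monomial y (fun i => nat_of_ord (b i)) z)).

Lemma sdeg_ge (b : 'I_d -> nat) i : (s i * b i <= sdeg s b)%N.
Proof. by rewrite /sdeg (bigD1 i) //= leq_addr. Qed.

Lemma poly_at_ext y k f g : (forall z, f z = g z) -> poly_at y k f -> poly_at y k g.
Proof. by move=> fg [l [l_deg fl]]; exists l; split => // z; rewrite -fg. Qed.

Lemma poly_at_le y k k' f : (k <= k')%N -> poly_at y k f -> poly_at y k' f.
Proof.
move=> kk' [l [l_deg fl]]; exists l; split => //.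
by apply: sub_all l_deg => p /leq_trans; apply.
Qed.

Lemma poly_at0 y k : poly_at y k (fun _ => RtoC 0).
Proof. by exists [::]; split => // z; rewrite /eval_terms big_nil. Qed.

Lemma poly_atD y k f g :
  poly_at y k f -> poly_at y k g -> poly_at y k (fun z => Cplus (f z) (g z)).
Proof.
move=> [l1 [l1_deg fl1]] [l2 [l2_deg gl2]]; exists (l1 ++ l2).
by split=> [|z]; rewrite ?all_cat ?l1_deg // /eval_terms big_cat /= fl1 gl2.
Qed.

Lemma poly_atZ y k c f : poly_at y k f -> poly_at y k (fun z => Cmult c (f z)).
Proof.
move=> [l [l_deg fl]]; exists [seq (Cmult c p.1, p.2) | p <- l].
split=> [|z]; first by rewrite all_map.
rewrite /eval_terms big_map fl big_distrr /=.
by apply: eq_bigr => p _; rewrite Cmult_assoc.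
Qed.

Lemma poly_at_term y k c b : (sdeg s b <= k)%N ->
  poly_at y k (fun z => Cmult c (RtoC (monomial y b z))).
Proof.
move=> b_deg; exists [:: (c, b)]; split; first by rewrite /= b_deg.
by move=> z; rewrite /eval_terms big_seq1.
Qed.

Lemma poly_at_sum y k (I : Type) (r : seq I) (P : pred I) (F : I -> pt d -> C) :
  (forall i, P i -> poly_at y k (F i)) ->
  poly_at y k (fun z => \big[Cplus/RtoC 0]_(i <- r | P i) F i z).
Proof.
move=> FP; elim: r => [|i r IH].
  by apply: poly_at_ext (poly_at0 y k) => z; rewrite big_nil.
case Pi: (P i); last by apply: poly_at_ext IH => z; rewrite big_cons Pi.
by apply: poly_at_ext (poly_atD (FP i Pi) IH) => z; rewrite big_cons Pi.
Qed.

Lemma poly_at_polyP_at y k (c : mindex d k -> C) : poly_at y k (polyP_at y c).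
Proof. by apply: poly_at_sum => b b_deg; apply: poly_at_term. Qed.

Definition incr_at (i : 'I_d) (b : 'I_d -> nat) : 'I_d -> nat :=
  fun j => (b j + (j == i))%N.

Lemma sdeg_incr_at i b : sdeg s (incr_at i b) = (sdeg s b + s i)%N.
Proof.
rewrite /sdeg /incr_at; under eq_bigr => j _ do rewrite mulnDr.
rewrite big_split /=; congr addn.
rewrite (bigD1 i) //= eqxx muln1 big1 ?addn0 // => j ji.
by rewrite (negbTE ji) muln0.
Qed.

Lemma monomial_incr_at y i b z :
  monomial y (incr_at i b) z = (z i - y i) * monomial y b z.
Proof.
rewrite /monomial /incr_at; under eq_bigr => j _ do rewrite pow_add.
rewrite big_split /= Rmult_comm; congr Rmult.
rewrite (bigD1 i) //= eqxx big1 => [|j ji]; first by rewrite /= !Rmult_1_r.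
by rewrite (negbTE ji).
Qed.

Lemma poly_at_mulX y y' k i f : poly_at y k f ->
  poly_at y (k + s i) (fun z => Cmult (RtoC (z i - y' i)) (f z)).
Proof.
move=> f_poly; have [l [l_deg fl]] := f_poly.
have shift_poly : poly_at y (k + s i) (fun z => Cmult (RtoC (y i - y' i)) (f z)).
  by apply: poly_at_le (poly_atZ _ f_poly); rewrite leq_addr.
have var_poly : poly_at y (k + s i) (fun z => Cmult (RtoC (z i - y i)) (f z)).
  exists [seq (p.1, incr_at i p.2) | p <- l]; split=> [|z].
    by rewrite all_map; apply: sub_all l_deg => p /=; rewrite sdeg_incr_at leq_add2r.
  rewrite /eval_terms big_map fl big_distrr /=; apply: eq_bigr => p _.
  by rewrite monomial_incr_at RtoC_mult Cmult_assoc (Cmult_comm (RtoC _)) -Cmult_assoc.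
apply: poly_at_ext (poly_atD var_poly shift_poly) => z.
by rewrite -Cmult_plus_distr_r -RtoC_plus; congr (Cmult (RtoC _)); ring.
Qed.

Lemma poly_at_mul_pow y y' k i n f : poly_at y k f ->
  poly_at y (k + s i * n) (fun z => Cmult (RtoC ((z i - y' i) ^ n)) (f z)).
Proof.
move=> f_poly; elim: n => [|n IH].
  by rewrite muln0 addn0; apply: poly_at_ext f_poly => z; rewrite Cmult_1_l.
rewrite mulnS (addnC (s i)) addnA.
apply: poly_at_ext (poly_at_mulX y' i IH) => z.
by rewrite Cmult_assoc -RtoC_mult.
Qed.

Lemma poly_at_monomial y y' b : poly_at y (sdeg s b) (fun z => RtoC (monomial y' b z)).
Proof.
rewrite /sdeg /monomial; elim: (index_enum 'I_d) => [|i r IH].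
  rewrite big_nil; apply: poly_at_ext (@poly_at_term y 0 (RtoC 1) (fun _ => 0%N) _) => [z|].
    by rewrite /monomial big1 ?big_nil ?Cmult_1_l.
  by rewrite /sdeg big1 // => i _; rewrite muln0.
rewrite big_cons addnC.
by apply: poly_at_ext (poly_at_mul_pow y' i (b i) IH) => z; rewrite big_cons RtoC_mult.
Qed.

Lemma poly_at_recenter y y' k f : poly_at y k f -> poly_at y' k f.
Proof.
move=> [l [l_deg fl]]; apply: poly_at_ext (fun z => esym (fl z)) _.
rewrite /eval_terms; elim: l l_deg {fl} => [_|p l IH /= /andP [p_deg l_deg]].
  by apply: poly_at_ext (poly_at0 _ _) => z; rewrite big_nil.
have p_poly := poly_atZ p.1 (poly_at_le p_deg (poly_at_monomial y' y p.2)).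
by apply: poly_at_ext (poly_atD p_poly (IH l_deg)) => z; rewrite big_cons.
Qed.

Lemma polyP_at_of_poly_at y k f :
  poly_at y k f -> exists c : mindex d k -> C, forall z, f z = polyP_at y c z.
Proof.
move=> [l [l_deg fl]].
suff [c lc] : exists c : mindex d k -> C, forall z, eval_terms y l z = polyP_at y c z.
  by exists c => z; rewrite fl.
elim: l l_deg {fl} => [_|[a b] l IH /= /andP [b_deg /IH [c lc]]].
  exists (fun _ => RtoC 0) => z.
  by rewrite /eval_terms big_nil /polyP_at big1 // => *; rewrite Cmult_0_l.
pose b0 : mindex d k := [ffun i => inord (b i)].
have b0E : (fun i => nat_of_ord (b0 i)) = b.
  apply: functional_extensionality => i; rewrite ffunE inordK // ltnS.
  apply: leq_trans b_deg; apply: leq_trans (sdeg_ge b i).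
  by rewrite leq_pmull.
exists (fun b' => Cplus (c b') (if b' == b0 then a else RtoC 0)) => z.
rewrite /eval_terms big_cons /= -/(eval_terms y l z) lc /polyP_at.
under [in RHS]eq_bigr => b' _ do rewrite Cmult_plus_distr_r.
rewrite big_split /= Cplus_comm; congr Cplus.
rewrite (bigD1 b0) /=; last by rewrite b0E.
rewrite eqxx b0E big1 => [|b' /andP [_ b'b0]]; first by rewrite Cplus_comm Cplus_0_l.
by rewrite (negbTE b'b0) Cmult_0_l.
Qed.

Lemma polyP_polyP_at0 k (c : mindex d k -> C) z :
  polyP s c z = polyP_at (fun _ => 0) c z.
Proof.
apply: eq_bigr => b _; congr (Cmult _ (RtoC _)).
by apply: eq_bigr => i _; rewrite Rminus_0_r.
Qed.

Lemma polyP_recenter y k (c : mindex d k -> C) :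
  exists q : mindex d k -> C, forall z, polyP s c z = polyP_at y q z.
Proof.
apply: polyP_at_of_poly_at; apply: (poly_at_recenter (y := fun _ => 0)).
by apply: poly_at_ext (poly_at_polyP_at _ c) => z; rewrite polyP_polyP_at0.
Qed.

Definition polyP_at_tail (y : pt d) (k a : nat) (q : mindex d k -> C) (z : pt d) : C :=
  \big[Cplus/RtoC 0]_(b : mindex d k | (sdegf s b <= k)%N && ~~ (sdegf s b <= a)%N)
     Cmult (q b) (RtoC (monomial y (fun i => nat_of_ord (b i)) z)).

Lemma polyP_at_split y k a (q : mindex d k -> C) : exists c : mindex d a -> C,
  forall z, polyP_at y q z = Cplus (polyP s c z) (polyP_at_tail y a q z).
Proof.
pose low z := \big[Cplus/RtoC 0]_(b : mindex d k |
  (sdegf s b <= k)%N && (sdegf s b <= a)%N)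
  Cmult (q b) (RtoC (monomial y (fun i => nat_of_ord (b i)) z)).
have /polyP_at_of_poly_at [c lowE] : poly_at (fun _ => 0) a low.
  apply: (poly_at_recenter (y := y)); apply: poly_at_sum => b /andP [_ b_deg].
  exact: poly_at_term.
exists c => z; rewrite polyP_polyP_at0 -lowE.
by rewrite /polyP_at (bigID (fun b : mindex d k => (sdegf s b <= a)%N)).
Qed.

End CenteredPolynomials.

Lemma Rabs_monomial_le d (s : 'I_d -> nat) (s_gt0 : forall i, (0 < s i)%N) y z b :
  Rabs (monomial y b z) <= sdist s y z ^ sdeg s b.
Proof.
rewrite /monomial Rabs_prod /sdeg -Rprod_pow.
apply: (proj2 (Rprod_le _ _)) => i _; rewrite -RPow_abs.
split; first by apply: pow_le; apply: Rabs_pos.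
rewrite mulnE pow_mult; apply: pow_incr; split; first exact: Rabs_pos.
by rewrite Rabs_minus_sym; apply: Rabs_sub_le_sdist.
Qed.

Lemma sum_f_R0_big f n : sum_f_R0 f n = \big[Rplus/0]_(i < n.+1) f i.
Proof.
elim: n => [|n IH]; first by rewrite big_ord_recl big_ord0 /=; ring.
by rewrite /= IH [in RHS]big_ord_recr.
Qed.

Lemma pow_add1_sub t m :
  (t + 1) ^ m - t ^ m = \big[Rplus/0]_(j < m) (Binomial.C m j * t ^ j).
Proof.
have Cmm : Binomial.C m m = 1.
  by rewrite /Binomial.C Nat.sub_diag /=; field; apply: INR_fact_neq_0.
rewrite binomial sum_f_R0_big big_ord_recr /= Cmm Nat.sub_diag /=.
rewrite (_ : forall a, a + 1 * t ^ m * 1 - t ^ m = a); last by move=> a; ring.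
by apply: eq_bigr => j _; rewrite pow1 Rmult_1_r.
Qed.

Definition dual_power_weights (E : nat) (W : nat -> nat -> R) : Prop :=
  forall e m, (e <= E)%N -> (m <= E)%N ->
    \big[Rplus/0]_(r < E.+1) (W e r * (INR r + 1) ^ m) = if m == e then 1 else 0.

Lemma Rsum_ord_recr_if n (F G : nat -> R) :
  \big[Rplus/0]_(r < n.+1) ((if (r < n)%N then F r else 0) * G r) =
  \big[Rplus/0]_(r < n) (F r * G r).
Proof.
rewrite big_ord_recr /= ltnn Rmult_0_l Rplus_0_r.
by apply: eq_bigr => i _; rewrite ltn_ord.
Qed.

Definition shift_right (F : nat -> R) (r : nat) : R := if r is r'.+1 then F r' else 0.

Lemma Rsum_shift_right n (F G : nat -> R) :
  \big[Rplus/0]_(r < n.+1) (shift_right F r * G r) =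
  \big[Rplus/0]_(r < n) (F r * G r.+1).
Proof. by rewrite big_ord_recl /= Rmult_0_l Rplus_0_l. Qed.

Section TopWeight.
Variables (E : nat) (W : nat -> nat -> R).
Hypothesis W_dual : dual_power_weights E W.

Definition top_weight (r : nat) : R :=
  / INR E.+1 * (shift_right (W E) r - (if (r < E.+1)%N then W E r else 0)).

(* The difference quotient of (r+1)^m in r has degree m - 1 and leading
   coefficient m, so only m = E + 1 survives the pairing with W E. *)
Lemma top_weight_spec m : (m <= E.+1)%N ->
  \big[Rplus/0]_(r < E.+2) (top_weight r * (INR r + 1) ^ m) =
  if m == E.+1 then 1 else 0.
Proof.
move=> mE; have E_pos : 0 < INR E.+1 by apply: INR_gt0.
rewrite /top_weight; under eq_bigr => r _ do rewrite Rmult_assoc Rmult_minus_distr_r.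
rewrite -big_distrr Rsum_sub /=.
rewrite (Rsum_shift_right _ _ (fun r => (INR r + 1) ^ m)).
rewrite (Rsum_ord_recr_if _ _ (fun r => (INR r + 1) ^ m)) -Rsum_sub.
under eq_bigr => r _ do rewrite -Rmult_minus_distr_l S_INR pow_add1_sub big_distrr.
rewrite exchange_big /=.
have -> : \big[Rplus/0]_(j < m) \big[Rplus/0]_(i < E.+1)
            (W E i * (Binomial.C m j * (INR i + 1) ^ j)) =
          \big[Rplus/0]_(j < m) (Binomial.C m j * if (j : nat) == E then 1 else 0).
  apply: eq_bigr => j _; rewrite -W_dual ?big_distrr //=.
    by apply: eq_bigr => i _; ring.
  by rewrite -ltnS; apply: leq_trans (ltn_ord j) mE.
case: (ltngtP m E.+1) mE => // [mE _ | -> _].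
  rewrite big1 ?Rmult_0_r // => j _.
  by rewrite (ltn_eqF (leq_trans (ltn_ord j) mE)) Rmult_0_r.
rewrite big_ord_recr /= eqxx big1 => [|j _]; last by rewrite (ltn_eqF (ltn_ord j)) Rmult_0_r.
rewrite /Binomial.C (_ : (E.+1 - E)%coq_nat = 1%N); last lia.
rewrite Rplus_0_l Rmult_1_r /= plus_INR mult_INR -/(INR E.+1) Rmult_1_r.
rewrite S_INR; have := pos_INR E => E_ge0.
by field; split; [apply: INR_fact_neq_0 | lra].
Qed.

End TopWeight.

(* Induction on E: the new last weight is a normalized first difference of
   W E, and the old weights are corrected by multiples of it. *)
Lemma dual_power_weights_exist E : exists W, dual_power_weights E W.
Proof.
elim: E => [|E [W W_dual]].
  exists (fun _ _ => 1) => e m; rewrite !leqn0 => /eqP -> /eqP ->.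
  by rewrite big_ord_recl big_ord0 /=; ring.
pose T := top_weight E W.
pose W' e := if e == E.+1 then T else
  fun r => (if (r < E.+1)%N then W e r else 0)
           - (\big[Rplus/0]_(r < E.+1) (W e r * (INR r + 1) ^ E.+1)) * T r.
exists W' => e m eE mE; rewrite /W'; case: eqP => [-> | e_neq]; first exact: top_weight_spec.
have {}eE : (e <= E)%N by rewrite -ltnS ltn_neqAle eE andbT; apply/eqP.
set v := \big[Rplus/0]_(r < E.+1) _.
under eq_bigr => r _ do rewrite Rmult_minus_distr_r Rmult_assoc.
rewrite Rsum_sub -big_distrr /= (Rsum_ord_recr_if _ _ (fun r => (INR r + 1) ^ m)).
rewrite top_weight_spec //.
case: (ltngtP m E.+1) mE => // [mE _ | -> _]; first by rewrite W_dual //; ring.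
have -> : (E.+1 == e) = false by apply/eqP => /esym.
by rewrite /v; ring.
Qed.

Section GridInterpolation.
Variables (d : nat) (s : 'I_d -> nat) (K : nat) (W : nat -> nat -> R).
Hypothesis s_gt0 : forall i, (0 < s i)%N.
Hypothesis W_dual : dual_power_weights K W.

Definition grid_pt (y : pt d) (lam : R) (rho : mindex d K) : pt d :=
  fun j => y j + (INR (rho j).+1 * lam) ^ s j.

Definition grid_weight (beta rho : mindex d K) : R :=
  \big[Rmult/1]_(i < d) W (s i * beta i)%N (rho i).

Definition grid_constant : R :=
  \big[Rplus/0]_(beta : mindex d K) \big[Rplus/0]_(rho : mindex d K)
    Rabs (grid_weight beta rho).

Lemma grid_constant_ge0 : 0 <= grid_constant.
Proof. by apply: Rsum_ge0 => *; apply: Rsum_ge0 => *; apply: Rabs_pos. Qed.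

Lemma monomial_grid_pt y lam rho (b : 'I_d -> nat) :
  monomial y b (grid_pt y lam rho) =
  lam ^ sdeg s b * \big[Rmult/1]_(i < d) (INR (rho i) + 1) ^ (s i * b i).
Proof.
rewrite /monomial /sdeg -Rprod_pow -big_split /=; apply: eq_bigr => i _.
rewrite /grid_pt (_ : forall a b, a + b - a = b); last by move=> *; ring.
by rewrite -pow_mult Rpow_mult_distr S_INR -!mulnE Rmult_comm.
Qed.

(* The tensor product of the one-dimensional dual weights reads off the
   coefficient of (z - y)^beta from the values on the grid. *)
Lemma grid_weight_monomial y lam (beta b : mindex d K) :
  (sdegf s beta <= K)%N -> (sdegf s b <= K)%N ->
  \big[Rplus/0]_(rho : mindex d K)
     (grid_weight beta rho * monomial y (fun i => nat_of_ord (b i)) (grid_pt y lam rho))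
  = lam ^ sdegf s b * (if b == beta then 1 else 0).
Proof.
move=> beta_deg b_deg.
under eq_bigr => rho _ do rewrite monomial_grid_pt Rmult_comm Rmult_assoc.
rewrite -big_distrr /=; congr Rmult.
under eq_bigr => rho _ do rewrite /grid_weight Rmult_comm -big_split /=.
rewrite -(bigA_distr_bigA (fun (i : 'I_d) (r : 'I_K.+1) =>
  W (s i * beta i)%N r * (INR r + 1) ^ (s i * b i))) /=.
rewrite (eq_bigr (fun i => if (s i * b i == s i * beta i)%N then 1 else 0)); last first.
  move=> i _; apply: W_dual.
    exact: leq_trans (sdeg_ge s (fun i => nat_of_ord (beta i)) i) beta_deg.
  exact: leq_trans (sdeg_ge s (fun i => nat_of_ord (b i)) i) b_deg.
case: eqP => [-> | b_neq]; first by rewrite big1 // => i _; rewrite eqxx.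
have [i bi] : exists i, (s i * b i != s i * beta i)%N.
  case: (pickP (fun i => s i * b i != s i * beta i)%N) => [i bi | b_eq]; first by exists i.
  case: b_neq; apply/ffunP => i; apply: val_inj.
  by have /negbFE := b_eq i; rewrite eqn_pmul2l // => /eqP.
by rewrite (bigD1 i) //= (negbTE bi) Rmult_0_l.
Qed.

Lemma grid_weight_polyP_at y lam (q : mindex d K -> C) (beta : mindex d K) :
  (sdegf s beta <= K)%N ->
  \big[Cplus/RtoC 0]_(rho : mindex d K)
     Cmult (RtoC (grid_weight beta rho)) (polyP_at s y q (grid_pt y lam rho))
  = Cmult (q beta) (RtoC (lam ^ sdegf s beta)).
Proof.
move=> beta_deg; rewrite /polyP_at.
under eq_bigr => rho _ do rewrite big_distrr.
rewrite exchange_big /=.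
under eq_bigr => b b_deg.
  rewrite (_ : \big[Cplus/RtoC 0]_(rho : mindex d K) _ =
     Cmult (q b) (RtoC (lam ^ sdegf s b * (if b == beta then 1 else 0)))).
    over.
  rewrite -(grid_weight_monomial y lam beta_deg b_deg) RtoC_sum big_distrr /=.
  apply: eq_bigr => rho _.
  by rewrite RtoC_mult Cmult_assoc (Cmult_comm (RtoC _) (q b)) -Cmult_assoc.
rewrite (bigD1 beta) //= eqxx big1 => [|b /andP [_ b_neq]].
  by rewrite Rmult_1_r Cplus_comm Cplus_0_l.
by rewrite (negbTE b_neq) Rmult_0_r Cmult_0_r.
Qed.

Lemma grid_coef_bound y lam V (q : mindex d K -> C) (beta : mindex d K) :
  0 < lam -> (sdegf s beta <= K)%N ->
  (forall rho, Cmod (polyP_at s y q (grid_pt y lam rho)) <= V) ->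
  Cmod (q beta) * lam ^ sdegf s beta <= grid_constant * V.
Proof.
move=> lam_gt0 beta_deg q_grid.
have V_ge0 : 0 <= V by apply: Rle_trans (Cmod_ge_0 _) (q_grid beta).
have lam_pow_ge0 : 0 <= lam ^ sdegf s beta by apply: pow_le; lra.
rewrite -(Rabs_right (lam ^ _) (Rle_ge _ _ lam_pow_ge0)).
rewrite -Cmod_R -Cmod_mult -(grid_weight_polyP_at y lam q beta_deg).
apply: Rle_trans (Cmod_sum _ _ _) _.
apply: Rle_trans (_ : \big[Rplus/0]_(rho : mindex d K) (Rabs (grid_weight beta rho) * V) <= _).
  apply: Rsum_le => rho _; rewrite Cmod_mult Cmod_R.
  by apply: Rmult_le_compat_l; [apply: Rabs_pos | apply: q_grid].
rewrite -big_distrl /=; apply: Rmult_le_compat_r => //.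
apply: (@Rsum_term_le _
  (fun beta => \big[Rplus/0]_(rho : mindex d K) Rabs (grid_weight beta rho))).
by move=> b; apply: Rsum_ge0 => *; apply: Rabs_pos.
Qed.

End GridInterpolation.

Section LocalHolder.
Variables (d : nat) (s : 'I_d -> nat) (eta alpha : R) (W : nat -> nat -> R).
Hypothesis s_gt0 : forall i, (0 < s i)%N.
Hypothesis alpha_gt0 : 0 < alpha.
Hypothesis alpha_lt_eta : alpha < eta.
Hypothesis W_dual : dual_power_weights (floorR eta) W.

Local Notation K := (floorR eta).
Local Notation A := (floorR alpha).

Definition grid_spread : R := \big[Rplus/0]_(j < d) INR K.+1.

Definition coef_constant : R := grid_constant s K W * 2 * rpow (1 + grid_spread) eta.

Definition mindex_count : R := \big[Rplus/0]_(b : mindex d K) 1.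

Definition holder_constant : R :=
  rpow 3 (eta - alpha) + rpow 2 (eta - alpha) + mindex_count * (coef_constant * 2 ^ K) + 1.

Lemma grid_spread_ge0 : 0 <= grid_spread.
Proof. by apply: Rsum_ge0 => *; apply: pos_INR. Qed.

Lemma coef_constant_ge0 : 0 <= coef_constant.
Proof.
have := grid_constant_ge0 s K W; have := rpow_ge0 (1 + grid_spread) eta.
rewrite /coef_constant; nra.
Qed.

Lemma mindex_count_ge0 : 0 <= mindex_count.
Proof. by apply: Rsum_ge0 => *; lra. Qed.

Lemma holder_constant_ge1 : 1 <= holder_constant.
Proof.
have := rpow_ge0 3 (eta - alpha); have := rpow_ge0 2 (eta - alpha).
have := pow_le 2 K ltac:(lra); have := coef_constant_ge0; have := mindex_count_ge0.
rewrite /holder_constant => *.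
have : 0 <= coef_constant * 2 ^ K by apply: Rmult_le_pos.
nra.
Qed.

Lemma high_term_bound (qb : C) lam t Rr V m :
  0 < lam < Rr -> 0 <= t <= 2 * Rr -> 0 <= V -> alpha <= INR m <= eta -> (m <= K)%N ->
  Cmod qb * lam ^ m <= V * rpow lam eta ->
  Cmod qb * t ^ m <= V * 2 ^ K * rpow Rr (eta - alpha) * rpow t alpha.
Proof.
move=> [lam_gt0 lamR] [t_ge0 tR] V_ge0 [am me] mK qb_lam.
have m_gt0 : (0 < m)%N by case: m am {me mK qb_lam} => [|m] //= ?; lra.
have qb_le : Cmod qb <= V * rpow Rr (eta - INR m).
  have lam_eta : rpow lam eta = rpow lam (eta - INR m) * lam ^ m.
    by rewrite -rpow_nat; [rewrite -rpowD; congr rpow; ring | lra | done].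
  apply: Rle_trans (_ : V * rpow lam (eta - INR m) <= _).
    apply: (Rmult_le_reg_r (lam ^ m)); first exact: pow_lt.
    by rewrite Rmult_assoc -lam_eta.
  by apply: Rmult_le_compat_l => //; apply: rpow_le; lra.
have t_le := pow_interpolate (conj t_ge0 tR) alpha_gt0 am.
have two_pow : rpow 2 (INR m - alpha) <= 2 ^ K.
  rewrite rpowE -?Rpower_pow; try lra; apply: Rle_Rpower; first lra.
  have /le_INR : (m <= K)%coq_nat by apply/leP.
  lra.
have R_split : rpow Rr (eta - INR m) * rpow (2 * Rr) (INR m - alpha) =
               rpow 2 (INR m - alpha) * rpow Rr (eta - alpha).
  rewrite rpowMl; try lra.
  rewrite -[in RHS](_ : eta - INR m + (INR m - alpha) = eta - alpha); last ring.
  by rewrite rpowD; ring.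
apply: Rle_trans (Rmult_le_compat _ _ _ _ (Cmod_ge_0 qb) (pow_le _ _ t_ge0) qb_le t_le) _.
rewrite (_ : V * _ * (_ * _) =
  V * rpow t alpha * (rpow Rr (eta - INR m) * rpow (2 * Rr) (INR m - alpha))); last ring.
rewrite R_split (_ : V * 2 ^ K * _ * _ = V * rpow t alpha * (2 ^ K * rpow Rr (eta - alpha)));
  last ring.
apply: Rmult_le_compat_l; first by apply: Rmult_le_pos => //; apply: rpow_ge0.
by apply: Rmult_le_compat_r => //; apply: rpow_ge0.
Qed.

Lemma tail_bound y z (q : mindex d K -> C) lam Rr V :
  0 < lam < Rr -> sdist s y z <= 2 * Rr -> 0 <= V ->
  (forall beta : mindex d K, (sdegf s beta <= K)%N ->
     Cmod (q beta) * lam ^ sdegf s beta <= V * rpow lam eta) ->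
  Cmod (polyP_at_tail s y A q z)
  <= mindex_count * (V * 2 ^ K) * rpow Rr (eta - alpha) * rpow (sdist s y z) alpha.
Proof.
move=> lamR tR V_ge0 q_bound; have t_ge0 := sdist_ge0 s y z.
pose X := V * 2 ^ K * rpow Rr (eta - alpha) * rpow (sdist s y z) alpha.
have X_ge0 : 0 <= X.
  have := pow_le 2 K ltac:(lra); have := rpow_ge0 Rr (eta - alpha).
  have := rpow_ge0 (sdist s y z) alpha => *.
  by repeat apply: Rmult_le_pos.
apply: Rle_trans (Cmod_sum _ _ _) _.
apply: Rle_trans (_ : _ <= \big[Rplus/0]_(b : mindex d K |
  (sdegf s b <= K)%N && ~~ (sdegf s b <= A)%N) X) _.
  apply: Rsum_le => b /andP [bK bA]; rewrite Cmod_mult Cmod_R.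
  apply: Rle_trans (Rmult_le_compat_l _ _ _ (Cmod_ge_0 _) (Rabs_monomial_le s_gt0 y z _)) _.
  apply: (high_term_bound (lam := lam)) => //; last exact: q_bound.
  have [A_le A_lt] := floorR_spec (Rlt_le _ _ alpha_gt0).
  have [K_le _] := floorR_spec (Rlt_le _ _ (Rlt_trans _ _ _ alpha_gt0 alpha_lt_eta)).
  rewrite -ltnNge in bA; move/leP/le_INR: bA; move/leP/le_INR: bK.
  by rewrite S_INR; lra.
apply: Rle_trans (Rsum_filter_le _ (fun _ => X_ge0)) _.
rewrite /mindex_count (_ : _ * _ * _ * _ = (\big[Rplus/0]_(b : mindex d K) 1) * X).
  by rewrite big_distrl /=; apply: Req_le; apply: eq_bigr => b _; ring.
by rewrite /X; ring.
Qed.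

Section Germ.
Variables (D : pt d -> Prop) (U : pt d -> pt d -> C) (Mn Ms : R).
Hypothesis D_grid : forall x y, D x -> D y -> x <> y ->
  forall rho : 'I_d -> nat, (forall j, (0 < rho j)%N) ->
    D (fun j => y j + (INR (rho j) * sdist s x y) ^ s j).
Hypothesis Mn_ge0 : 0 <= Mn.
Hypothesis Ms_ge0 : 0 <= Ms.
Hypothesis U_bound : forall x y, D x -> D y -> Cmod (U x y) <= Mn * rpow (sdist s x y) eta.

Definition increment_poly (x y : pt d) (c : mindex d K -> C) : Prop :=
  forall z, D z ->
    Cmod (Cminus (Cminus (U x z) (U y z)) (polyP s c z))
      <= Ms * rpow (sdist s y z) alpha * rpow (sdist s x y + sdist s y z) (eta - alpha).

Lemma polyP_grid_bound x y c (rho : mindex d K) :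
  D x -> D y -> x <> y -> increment_poly x y c ->
  Cmod (polyP s c (grid_pt s y (sdist s x y) rho))
    <= (2 * Mn + Ms) * rpow (sdist s x y * (1 + grid_spread)) eta.
Proof.
move=> Dx Dy xy c_incr; set lam := sdist s x y; set z := grid_pt s y lam rho.
have Dz : D z := D_grid Dx Dy xy (rho := fun j => (rho j).+1) (fun j => ltn0Sn _).
have lam_ge0 : 0 <= lam by apply: sdist_ge0.
have := grid_spread_ge0 => spread_ge0.
have yz : sdist s y z <= lam * grid_spread.
  rewrite /z /grid_pt sdist_shift // /grid_spread big_distrr.
  apply: Rsum_le => j _; rewrite Rmult_comm; apply: Rmult_le_compat_l => //.
  by apply: le_INR; apply/leP; apply: ltn_ord.
have yz_ge0 := sdist_ge0 s y z.
have xz : sdist s x z <= lam * (1 + grid_spread).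
  by have := sdist_triangle s_gt0 x y z; rewrite -/lam; lra.
have R_ge0 : 0 <= lam * (1 + grid_spread) by apply: Rmult_le_pos; lra.
have -> : polyP s c z = Cminus (Cminus (U x z) (U y z))
                         (Cminus (Cminus (U x z) (U y z)) (polyP s c z)) by ring.
apply: Rle_trans (Cmod_sub_sub_le _ _ _) _.
have Uxz : Cmod (U x z) <= Mn * rpow (lam * (1 + grid_spread)) eta.
  apply: Rle_trans (U_bound Dx Dz) _; apply: Rmult_le_compat_l => //.
  by apply: rpow_le; [split; [apply: sdist_ge0 | done] | lra].
have Uyz : Cmod (U y z) <= Mn * rpow (lam * (1 + grid_spread)) eta.
  apply: Rle_trans (U_bound Dy Dz) _; apply: Rmult_le_compat_l => //.
  by apply: rpow_le; lra.
have Qz : Cmod (Cminus (Cminus (U x z) (U y z)) (polyP s c z))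
            <= Ms * rpow (lam * (1 + grid_spread)) eta.
  apply: Rle_trans (c_incr _ Dz) _; rewrite -/lam Rmult_assoc; apply: Rmult_le_compat_l => //.
  rewrite -{2}(Rplus_minus alpha eta) rpowD.
  by apply: Rmult_le_compat; try apply: rpow_ge0; apply: rpow_le; lra.
lra.
Qed.

Lemma recentered_coef_bound x y c (q : mindex d K -> C) (beta : mindex d K) :
  D x -> D y -> x <> y -> increment_poly x y c ->
  (forall z, polyP s c z = polyP_at s y q z) -> (sdegf s beta <= K)%N ->
  Cmod (q beta) * sdist s x y ^ sdegf s beta
    <= coef_constant * (Mn + Ms) * rpow (sdist s x y) eta.
Proof.
move=> Dx Dy xy c_incr cq beta_deg; set lam := sdist s x y.
have lam_gt0 : 0 < lam by apply: sdist_gt0.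
have spread_ge0 := grid_spread_ge0.
have lam_eta := rpow_ge0 lam eta; have c1_ge0 := rpow_ge0 (1 + grid_spread) eta.
have grid_bound : forall rho : mindex d K, Cmod (polyP_at s y q (grid_pt s y lam rho))
    <= (2 * Mn + Ms) * (rpow lam eta * rpow (1 + grid_spread) eta).
  by move=> rho; rewrite -cq -rpowMl; [apply: polyP_grid_bound | lra | lra].
apply: Rle_trans (grid_coef_bound s_gt0 W_dual lam_gt0 beta_deg grid_bound) _.
rewrite /coef_constant; have := grid_constant_ge0 s K W => C_ge0.
rewrite (_ : grid_constant s K W * 2 * _ * (Mn + Ms) * _ =
  grid_constant s K W * (2 * (Mn + Ms) * (rpow lam eta * rpow (1 + grid_spread) eta)));
  last ring.
apply: Rmult_le_compat_l => //; apply: Rmult_le_compat_r; first exact: Rmult_le_pos.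
lra.
Qed.

Lemma local_holder_center Rr x : 0 < Rr -> D x ->
  forall z, D z -> sdist s x z < Rr ->
  Cmod (Cminus (U x z) (polyP s (fun _ : mindex d A => RtoC 0) z))
    <= holder_constant * (Mn + Ms) * rpow Rr (eta - alpha) * rpow (sdist s z x) alpha.
Proof.
move=> Rr_gt0 Dx z Dz xz.
rewrite (_ : polyP s _ z = RtoC 0); last by apply: big1 => b _; rewrite Cmult_0_l.
rewrite (_ : Cminus (U x z) (RtoC 0) = U x z); last ring.
apply: Rle_trans (U_bound Dx Dz) _.
have zx : sdist s z x <= Rr by rewrite sdist_sym; lra.
have := rpow_interpolate (conj (sdist_ge0 s z x) zx) (Rlt_le _ _ alpha_lt_eta).
rewrite sdist_sym => interp.
apply: Rle_trans (Rmult_le_compat_l _ _ _ Mn_ge0 interp) _.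
rewrite sdist_sym (_ : holder_constant * (Mn + Ms) * _ * _ =
  holder_constant * (Mn + Ms) * (rpow (sdist s z x) alpha * rpow Rr (eta - alpha))); last ring.
apply: Rmult_le_compat_r; first by apply: Rmult_le_pos; apply: rpow_ge0.
by have := holder_constant_ge1; nra.
Qed.

Lemma local_holder_off_center Rr x y c : D x -> D y -> x <> y ->
  sdist s x y < Rr -> increment_poly x y c ->
  exists c' : mindex d A -> C, forall z, D z -> sdist s x z < Rr ->
    Cmod (Cminus (U x z) (polyP s c' z))
      <= holder_constant * (Mn + Ms) * rpow Rr (eta - alpha) * rpow (sdist s z y) alpha.
Proof.
move=> Dx Dy xy xyR c_incr; set lam := sdist s x y in xyR.
have lam_gt0 : 0 < lam := sdist_gt0 s_gt0 xy.
have [q cq] := polyP_recenter s_gt0 y c.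
have [c' q_split] := polyP_at_split s_gt0 y A q.
exists c' => z Dz xz; rewrite sdist_sym; set t := sdist s y z.
have t_ge0 : 0 <= t := sdist_ge0 s y z.
have t_le : t <= 2 * Rr.
  by have := sdist_triangle s_gt0 y x z; rewrite (sdist_sym s y x) -/lam -/t; lra.
set E := rpow Rr (eta - alpha).
have E_ge0 : 0 <= E := rpow_ge0 _ _.
have tA_ge0 : 0 <= rpow t alpha := rpow_ge0 _ _.
have incr_part : Cmod (Cminus (Cminus (U x z) (U y z)) (polyP s c z))
                   <= Ms * rpow 3 (eta - alpha) * E * rpow t alpha.
  apply: Rle_trans (c_incr _ Dz) _; rewrite -/lam -/t.
  rewrite (_ : Ms * _ * E * _ = Ms * rpow t alpha * rpow (3 * Rr) (eta - alpha)).
    by apply: Rmult_le_compat_l; [nra | apply: rpow_le; lra].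
  by rewrite rpowMl /E; [ring | lra | lra].
have Uy_part : Cmod (U y z) <= Mn * rpow 2 (eta - alpha) * E * rpow t alpha.
  apply: Rle_trans (U_bound Dy Dz) _; rewrite -/t.
  have := rpow_interpolate (conj t_ge0 t_le) (Rlt_le _ _ alpha_lt_eta).
  rewrite rpowMl -/E; try lra; move=> interp.
  by rewrite (_ : Mn * _ * E * _ = Mn * (rpow t alpha * (rpow 2 (eta - alpha) * E)));
    [apply: Rmult_le_compat_l | ring].
have high_part : Cmod (polyP_at_tail s y A q z)
    <= mindex_count * (coef_constant * (Mn + Ms) * 2 ^ K) * E * rpow t alpha
  := tail_bound (q := q) (conj lam_gt0 xyR) t_le
  (Rmult_le_pos _ _ coef_constant_ge0 (Rplus_le_le_0_compat _ _ Mn_ge0 Ms_ge0))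
  (fun beta => recentered_coef_bound Dx Dy xy c_incr cq).
have -> : Cminus (U x z) (polyP s c' z) = Cplus (Cplus
    (Cminus (Cminus (U x z) (U y z)) (polyP s c z)) (U y z)) (polyP_at_tail s y A q z).
  by rewrite cq q_split; ring.
apply: Rle_trans (Cmod_triangle _ _) _.
apply: Rle_trans (Rplus_le_compat_r _ _ _ (Cmod_triangle _ _)) _.
have P_ge0 : 0 <= E * rpow t alpha by apply: Rmult_le_pos.
have := Rmult_le_pos _ _ (Rmult_le_pos _ _ Mn_ge0 (rpow_ge0 3 (eta - alpha))) P_ge0.
have := Rmult_le_pos _ _ (Rmult_le_pos _ _ Ms_ge0 (rpow_ge0 2 (eta - alpha))) P_ge0.
have := Rmult_le_pos _ _ (Rplus_le_le_0_compat _ _ Mn_ge0 Ms_ge0) P_ge0.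
by rewrite /holder_constant; lra.
Qed.

Hypothesis U_incr : forall x y, D x -> D y -> exists c, increment_poly x y c.

Lemma local_holder Rr x y : 0 < Rr -> D x -> D y -> sdist s x y < Rr ->
  exists c : mindex d A -> C, forall z, D z -> sdist s x z < Rr ->
    Cmod (Cminus (U x z) (polyP s c z))
      <= holder_constant * (Mn + Ms) * rpow Rr (eta - alpha) * rpow (sdist s z y) alpha.
Proof.
move=> Rr_gt0 Dx Dy xyR; case: (classic (x = y)) => [<- | xy].
  by exists (fun _ => RtoC 0); apply: local_holder_center.
have [c c_incr] := U_incr Dx Dy.
exact: local_holder_off_center xy xyR c_incr.
Qed.

End Germ.

End LocalHolder.

Lemma Glb_Rbar_ge0 (E : R -> Prop) :
  (forall M, E M -> 0 < M) -> Rbar_le 0 (Glb_Rbar E).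
Proof.
move=> E_gt0; apply: (proj2 (Glb_Rbar_correct E)) => M /E_gt0 /=; lra.
Qed.

Lemma Glb_Rbar_approx (E : R -> Prop) (g eps : R) : Glb_Rbar E = g -> 0 < eps ->
  exists M, E M /\ M < g + eps.
Proof.
move=> gE eps_gt0; apply: NNPP => no_M.
have [_ glb] := Glb_Rbar_correct E; rewrite gE in glb.
suff : Rbar_le (g + eps) g by move=> /=; lra.
apply: glb => M EM /=; case: (Rle_lt_dec (g + eps) M) => // M_lt.
by case: no_M; exists M.
Qed.

Lemma Rbar_le_eps (h : Rbar) (B c : R) : 0 <= c ->
  (forall eps, 0 < eps -> Rbar_le h (B + c * eps)) -> Rbar_le h B.
Proof.
move=> c_ge0 h_le; case: h h_le => [h|//|//] h_le /=; last by have := h_le 1 Rlt_0_1.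
case: (Rle_lt_dec h B) => // B_lt.
have eps_gt0 : 0 < (h - B) / (c + 1) by apply: Rdiv_lt_0_compat; lra.
have /= := h_le _ eps_gt0.
have : c * ((h - B) / (c + 1)) < h - B.
  rewrite (_ : c * _ = (h - B) * (c / (c + 1))); last by field; lra.
  have : c / (c + 1) < 1 by apply: (Rmult_lt_reg_r (c + 1)); [lra | field_simplify; lra].
  nra.
lra.
Qed.

Theorem lemma3p4 :
  forall (d : nat) (s : 'I_d -> nat) (eta alpha : R),
    (forall i, (0 < s i)%N) ->
    (0 < alpha)%R -> (alpha < eta)%R ->
    (forall n : nat, alpha <> INR n) ->
    exists K : R, (0 < K)%R /\
      forall (D : pt d -> Prop) (U : pt d -> pt d -> C),
        (forall x y : pt d, D x -> D y -> x <> y ->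
           forall rho : 'I_d -> nat, (forall j, (0 < rho j)%N) ->
             D (fun j => (y j + (INR (rho j) * sdist s x y) ^ (s j))%R)) ->
        germ s D U ->
        Rbar_lt (Rbar_plus (Gnorm s D eta U) (Gsemi s D eta alpha U)) p_infty ->
        forall Rr : R, (0 < Rr)%R ->
          forall x : pt d, D x ->
            Rbar_le (Holder s (fun z => D z /\ sball s x Rr z) alpha (U x))
              (Rbar_mult (Rbar_mult (Coquelicot.Rbar.Finite K)
                   (Rbar_plus (Gnorm s D eta U) (Gsemi s D eta alpha U)))
                 (Coquelicot.Rbar.Finite (rpow Rr (eta - alpha)))).
Proof.
move=> d s eta alpha s_gt0 alpha_gt0 alpha_lt_eta _.
have [W W_dual] := dual_power_weights_exist (floorR eta).
set K0 := holder_constant s eta alpha W.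
have K0_ge1 : 1 <= K0 by apply: holder_constant_ge1.
exists K0; split; first lra.
move=> D U D_grid _ norm_finite Rr Rr_gt0 x Dx.
have [gn [gs [gnE gsE]]] : exists gn gs : R,
    Gnorm s D eta U = gn /\ Gsemi s D eta alpha U = gs.
  have : Rbar_le 0 (Gnorm s D eta U) by apply: Glb_Rbar_ge0 => M [].
  have : Rbar_le 0 (Gsemi s D eta alpha U) by apply: Glb_Rbar_ge0 => M [].
  move: norm_finite; case: (Gnorm s D eta U) => [a| |];
    case: (Gsemi s D eta alpha U) => [b| |] //= *.
  by exists a, b.
rewrite gnE gsE /=.
have E_gt0 : 0 < rpow Rr (eta - alpha) by apply: rpow_gt0.
apply: (@Rbar_le_eps _ _ (K0 * 2 * rpow Rr (eta - alpha))); first by nra.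
move=> eps eps_gt0.
have [Mn [[Mn_gt0 U_bound] Mn_lt]] := Glb_Rbar_approx gnE eps_gt0.
have [Ms [[Ms_gt0 U_incr] Ms_lt]] := Glb_Rbar_approx gsE eps_gt0.
apply: Rbar_le_trans (_ : Rbar_le _ (K0 * (Mn + Ms) * rpow Rr (eta - alpha))) _.
  apply: (proj1 (Glb_Rbar_correct _)); split.
    by repeat apply: Rmult_lt_0_compat; lra.
  move=> y [Dy xy].
  have [c c_local] := local_holder s_gt0 alpha_gt0 alpha_lt_eta W_dual D_grid
    (Rlt_le _ _ Mn_gt0) (Rlt_le _ _ Ms_gt0) U_bound U_incr Rr_gt0 Dx Dy xy.
  by exists c => z [Dz xz]; apply: c_local.
rewrite /= (_ : _ + _ * eps = K0 * (gn + eps + (gs + eps)) * rpow Rr (eta - alpha)); last ring.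
by apply: Rmult_le_compat_r; [lra | apply: Rmult_le_compat_l; lra].
Qed.
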